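(* Let $\Omega\subset\mathbb{R}^n$ be a bounded open convex set with smooth boundary, let $\Lambda>0$, and let $u$ be a nonconstant continuous viscosity solution of $(N_\Lambda)$ normalized so that $\max_{\overline\Omega}u=\frac1\Lambda$. Then $$|x-x_0|\ge u(x)\qquad\text{for all } x\in\overline\Omega \text{ with } u(x)\ge0 \text{ and all } x_0\in\Omega \text{ with } u(x_0)\le0 .$$ Consequently $\sup_{x\in\overline{\Omega_+}}\operatorname{dist}(x,\{u=0\})\ge\frac1\Lambda$, where $\Omega_+=\{x\in\Omega:u(x)>0\}$.
   Context: $\nu$ denotes the outer unit normal to $\partial\Omega$, and $\Delta_\infty u=\sum_{i,j=1}^n u_{x_i}u_{x_ix_j}u_{x_j}$. For $\Lambda\ge 0$, problem $(N_\Lambda)$ is $$\min\{|\nabla u|-\Lambda|u|,-\Delta_\infty u\}=0 \text{ in }\{u>0\}\cap\Omega,\quad \max\{\Lambda|u|-|\nabla u|,-\Delta_\infty u\}=0 \text{ in }\{u<0\}\cap\Omega,\quad -\Delta_\infty u=0 \text{ in }\{u=0\}\cap\Omega,\quad \tfrac{\partial u}{\partial\nu}=0 \text{ on }\partial\Omega,$$ understood in the viscosity sense as follows. For $s\in\mathbb{R}$, $\xi\in\mathbb{R}^n$, $X$ a symmetric $n\times n$ matrix, let $F(s,\xi,X)=\min\{|\xi|-\Lambda|s|,-\langle X\xi,\xi\rangle\}$, $G(s,\xi,X)=\max\{\Lambda|s|-|\xi|,-\langle X\xi,\xi\rangle\}$, $H(X)=-\langle X\xi,\xi\rangle$ (evaluated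 at the same $\xi$). For a function $u$ and point $x_0$, let $E$ denote $F$ if $u(x_0)>0$, $G$ if $u(x_0)<0$, $H$ if $u(x_0)=0$. An upper semicontinuous $u$ on $\overline\Omega$ is a viscosity subsolution if: for every $x_0\in\Omega$ and $\phi\in C^2(\Omega)$ with $\phi(x_0)=u(x_0)$ and $u(x)<\phi(x)$ for $x\neq x_0$, one has $E(\phi(x_0),\nabla\phi(x_0),\nabla^2\phi(x_0))\le 0$; and for every $x_0\in\partial\Omega$ and $\phi\in C^2(\overline\Omega)$ with the same touching property, $\min\{E(\phi(x_0),\nabla\phi(x_0),\nabla^2\phi(x_0)),\frac{\partial\phi}{\partial\nu}(x_0)\}\le 0$. A lower semicontinuous $u$ is a viscosity supersolution if the same holds with $u(x)>\phi(x)$ for $x\ne x_0$, with ''$E\le 0$'' replaced by ''$E\ge 0$'' at interior points and with $\max\{E(\phi(x_0),\nabla\phi(x_0),\nabla^2\phi(x_0)),\frac{\partial\phi}{\partial\nu}(x_0)\}\ge 0$ at boundary points. A continuous $u$ is a viscosity solution if it is both a sub- and a supersolution. *)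

From Stdlib Require Import Reals.
From mathcomp Require Import ssreflect ssrbool ssrfun eqtype ssrnat seq fintype bigop.
Set Implicit Arguments. Unset Strict Implicit.
Local Open Scope R_scope.

Definition Rn (n : nat) := 'I_n -> R.

Definition vadd {n} (x y : Rn n) : Rn n := fun i => x i + y i.
Definition vsub {n} (x y : Rn n) : Rn n := fun i => x i - y i.
Definition vscal {n} (t : R) (x : Rn n) : Rn n := fun i => t * x i.
Definition vdot {n} (x y : Rn n) : R := \big[Rplus/0]_(i < n) (x i * y i).
Definition vnorm {n} (x : Rn n) : R := sqrt (vdot x x).
Definition vdist {n} (x y : Rn n) : R := vnorm (vsub x y).
Definition ebasis {n} (i : 'I_n) : Rn n := fun j => if j == i then 1 else 0.

Definition quadform {n} (X : 'I_n -> 'I_n -> R) (xi : Rn n) : R :=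
  \big[Rplus/0]_(i < n) \big[Rplus/0]_(j < n) (X i j * xi i * xi j).

Definition is_open {n} (U : Rn n -> Prop) : Prop :=
  forall x, U x -> exists r, 0 < r /\ forall y, vdist y x < r -> U y.
Definition is_bounded {n} (U : Rn n -> Prop) : Prop :=
  exists M, forall x, U x -> vnorm x <= M.
Definition is_convex {n} (U : Rn n -> Prop) : Prop :=
  forall x y t, U x -> U y -> 0 <= t <= 1 -> U (vadd x (vscal t (vsub y x))).
Definition closure {n} (U : Rn n -> Prop) (x : Rn n) : Prop :=
  forall eps, 0 < eps -> exists y, U y /\ vdist y x < eps.
Definition boundary {n} (U : Rn n -> Prop) (x : Rn n) : Prop :=
  closure U x /\ forall eps, 0 < eps -> exists y, ~ U y /\ vdist y x < eps.

Definition continuous_on {n} (U : Rn n -> Prop) (f : Rn n -> R) : Prop :=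
  forall x, U x -> forall eps, 0 < eps -> exists delta, 0 < delta /\
    forall y, U y -> vdist y x < delta -> Rabs (f y - f x) < eps.

Definition has_partial {n} (i : 'I_n) (f : Rn n -> R) (x : Rn n) (l : R) : Prop :=
  derivable_pt_lim (fun t => f (vadd x (vscal t (ebasis i)))) 0 l.

Fixpoint Ck_on {n} (k : nat) (U : Rn n -> Prop) (f : Rn n -> R) : Prop :=
  continuous_on U f /\
  match k with
  | O => True
  | S k' => exists g : 'I_n -> Rn n -> R,
      (forall i x, U x -> has_partial i f x (g i x)) /\ forall i, Ck_on k' U (g i)
  end.
Definition smooth_on {n} (U : Rn n -> Prop) (f : Rn n -> R) : Prop :=
  forall k, Ck_on k U f.

Definition C2_data {n} (U : Rn n -> Prop) (f : Rn n -> R)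
  (Df : 'I_n -> Rn n -> R) (D2f : 'I_n -> 'I_n -> Rn n -> R) : Prop :=
  continuous_on U f /\
  (forall i x, U x -> has_partial i f x (Df i x)) /\
  (forall i, continuous_on U (Df i)) /\
  (forall i j x, U x -> has_partial j (Df i) x (D2f i j x)) /\
  (forall i j, continuous_on U (D2f i j)).

Definition ball {n} (x : Rn n) (r : R) (y : Rn n) : Prop := vdist y x < r.

Definition local_defining {n} (Omega : Rn n -> Prop) (x0 : Rn n) (r : R)
  (rho : Rn n -> R) (Drho : 'I_n -> Rn n -> R) : Prop :=
  0 < r /\ smooth_on (ball x0 r) rho /\
  (forall i x, ball x0 r x -> has_partial i rho x (Drho i x)) /\
  (forall y, ball x0 r y -> (Omega y <-> rho y < 0)) /\
  (exists i, Drho i x0 <> 0).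

Definition smooth_boundary {n} (Omega : Rn n -> Prop) : Prop :=
  forall x0, boundary Omega x0 -> exists r rho Drho, local_defining Omega x0 r rho Drho.

Definition outer_unit_normal {n} (Omega : Rn n -> Prop) (x0 nu : Rn n) : Prop :=
  exists r rho Drho, local_defining Omega x0 r rho Drho /\
    nu = vscal (/ vnorm (fun i => Drho i x0)) (fun i => Drho i x0).

Definition opF {n} (Lam s : R) (xi : Rn n) (X : 'I_n -> 'I_n -> R) : R :=
  Rmin (vnorm xi - Lam * Rabs s) (- quadform X xi).
Definition opG {n} (Lam s : R) (xi : Rn n) (X : 'I_n -> 'I_n -> R) : R :=
  Rmax (Lam * Rabs s - vnorm xi) (- quadform X xi).
Definition opH {n} (xi : Rn n) (X : 'I_n -> 'I_n -> R) : R := - quadform X xi.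
Definition opE {n} (Lam ux0 s : R) (xi : Rn n) (X : 'I_n -> 'I_n -> R) : R :=
  match Rcase_abs ux0 with
  | left _ => opG Lam s xi X
  | right _ => if Req_EM_T ux0 0 then opH xi X
               else opF Lam s xi X
  end.

Definition usc_on {n} (U : Rn n -> Prop) (u : Rn n -> R) : Prop :=
  forall x, U x -> forall eps, 0 < eps -> exists delta, 0 < delta /\
    forall y, U y -> vdist y x < delta -> u y < u x + eps.
Definition lsc_on {n} (U : Rn n -> Prop) (u : Rn n -> R) : Prop :=
  forall x, U x -> forall eps, 0 < eps -> exists delta, 0 < delta /\
    forall y, U y -> vdist y x < delta -> u x - eps < u y.

Definition visc_subsolution {n} (Lam : R) (Omega : Rn n -> Prop) (u : Rn n -> R) : Prop :=
  usc_on (closure Omega) u /\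
  (forall x0 phi Dphi D2phi, Omega x0 -> C2_data Omega phi Dphi D2phi ->
     phi x0 = u x0 -> (forall x, Omega x -> x <> x0 -> u x < phi x) ->
     opE Lam (u x0) (phi x0) (fun i => Dphi i x0) (fun i j => D2phi i j x0) <= 0) /\
  (forall x0 (V : Rn n -> Prop) phi Dphi D2phi, boundary Omega x0 ->
     is_open V -> (forall x, closure Omega x -> V x) -> C2_data V phi Dphi D2phi ->
     phi x0 = u x0 -> (forall x, closure Omega x -> x <> x0 -> u x < phi x) ->
     forall nu, outer_unit_normal Omega x0 nu ->
     Rmin (opE Lam (u x0) (phi x0) (fun i => Dphi i x0) (fun i j => D2phi i j x0))
          (vdot (fun i => Dphi i x0) nu) <= 0).

Definition visc_supersolution {n} (Lam : R) (Omega : Rn n -> Prop) (u : Rn n -> R) : Prop :=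
  lsc_on (closure Omega) u /\
  (forall x0 phi Dphi D2phi, Omega x0 -> C2_data Omega phi Dphi D2phi ->
     phi x0 = u x0 -> (forall x, Omega x -> x <> x0 -> u x > phi x) ->
     opE Lam (u x0) (phi x0) (fun i => Dphi i x0) (fun i j => D2phi i j x0) >= 0) /\
  (forall x0 (V : Rn n -> Prop) phi Dphi D2phi, boundary Omega x0 ->
     is_open V -> (forall x, closure Omega x -> V x) -> C2_data V phi Dphi D2phi ->
     phi x0 = u x0 -> (forall x, closure Omega x -> x <> x0 -> u x > phi x) ->
     forall nu, outer_unit_normal Omega x0 nu ->
     Rmax (opE Lam (u x0) (phi x0) (fun i => Dphi i x0) (fun i j => D2phi i j x0))
          (vdot (fun i => Dphi i x0) nu) >= 0).

Definition visc_solution {n} (Lam : R) (Omega : Rn n -> Prop) (u : Rn n -> R) : Prop :=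
  continuous_on (closure Omega) u /\
  visc_subsolution Lam Omega u /\ visc_supersolution Lam Omega u.

(* Suppose u(xb) > |xb - x0| with u(x0) <= 0.  Compare u with the smoothed cone
   phi(x) = (1 + dl) sqrt(|x - x0|^2 + h^2) - ep |x - x0|^2 for small dl, ep, h > 0: u - phi
   is larger at xb than anywhere near x0, so it attains its maximum over the closure at a
   point y away from x0.  There |D phi| > 1 >= Lam u(y) and phi is strictly concave along
   D phi, so the subsolution inequality fails at y if y lies in Omega; on the boundary,
   convexity makes D phi(y), a positive multiple of y - x0, point outwards, contradicting
   the Neumann condition.  The second claim follows by taking x at a maximum point of u. *)

From Stdlib Require Import Reals Lra Psatz FunctionalExtensionality ClassicalEpsilon Classical.
From mathcomp Require Import ssreflect ssrbool ssrfun eqtype ssrnat seq fintype bigop.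
From HB Require Import structures.
Set Implicit Arguments. Unset Strict Implicit.
Local Open Scope R_scope.

HB.instance Definition _ := Monoid.isComLaw.Build R 0 Rplus
  (fun a b c => esym (Rplus_assoc a b c)) Rplus_comm Rplus_0_l.

Section RealSums.
Variable n : nat.
Implicit Types f g : 'I_n -> R.

Lemma sumR_add f g :
  \big[Rplus/0]_(i < n) (f i + g i) = \big[Rplus/0]_(i < n) f i + \big[Rplus/0]_(i < n) g i.
Proof. exact: big_split. Qed.

Lemma sumR_scal c f : \big[Rplus/0]_(i < n) (c * f i) = c * \big[Rplus/0]_(i < n) f i.
Proof. by elim/big_rec2: _ => [|i a b _ ->]; lra. Qed.

Lemma sumR_le f g : (forall i, f i <= g i) ->
  \big[Rplus/0]_(i < n) f i <= \big[Rplus/0]_(i < n) g i.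
Proof. by move=> H; elim/big_rec2: _ => [|i a b _ Hab]; [lra | have := H i; lra]. Qed.

Lemma sumR_ge0 f : (forall i, 0 <= f i) -> 0 <= \big[Rplus/0]_(i < n) f i.
Proof. by move=> H; elim/big_rec: _ => [|i a _ Ha]; [lra | have := H i; lra]. Qed.

Lemma sumR_const c : \big[Rplus/0]_(i < n) c = INR n * c.
Proof.
rewrite big_const_ord; elim: n => [|m IH]; first by rewrite /=; lra.
by rewrite iterS IH S_INR; lra.
Qed.

Lemma sumR_delta f (i : 'I_n) :
  \big[Rplus/0]_(k < n) (f k * (if k == i then 1 else 0)) = f i.
Proof.
rewrite (bigD1 i) //= eqxx big1; first lra.
by move=> k /negbTE ->; lra.
Qed.

Lemma sumR_ge_term f (i : 'I_n) : (forall k, 0 <= f k) -> f i <= \big[Rplus/0]_(k < n) f k.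
Proof.
move=> H; rewrite (bigD1 i) //=.
suff Hrest : 0 <= \big[Rplus/0]_(k < n | k != i) f k.
  by rewrite -[X in X <= _]Rplus_0_r; exact: Rplus_le_compat_l.
by elim/big_rec: _ => [|k a _ Ha]; [lra | have := H k; lra].
Qed.

Lemma sumR_sq_le_sq_sum f : (forall k, 0 <= f k) ->
  \big[Rplus/0]_(k < n) (f k * f k) <= \big[Rplus/0]_(k < n) f k * \big[Rplus/0]_(k < n) f k.
Proof.
move=> H.
suff [] : \big[Rplus/0]_(k < n) (f k * f k) <=
  \big[Rplus/0]_(k < n) f k * \big[Rplus/0]_(k < n) f k /\ 0 <= \big[Rplus/0]_(k < n) f k by [].
by elim/big_rec2: _ => [|i a b _ [Hab Hb]]; [lra | have := H i; split; nra].
Qed.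

End RealSums.

Lemma lt_div_of_mul_lt (a b c : R) : 0 < c -> a * c < b -> a < b / c.
Proof. by move=> Hc H; apply: (Rmult_lt_reg_r c) => //; rewrite /Rdiv Rmult_assoc Rinv_l; lra. Qed.

Lemma div_lt_of_lt_mul (a b c : R) : 0 < c -> b < a * c -> b / c < a.
Proof. by move=> Hc H; apply: (Rmult_lt_reg_r c) => //; rewrite /Rdiv Rmult_assoc Rinv_l; lra. Qed.

Lemma mul_le_of_le_div (a b c : R) : 0 < c -> a <= b / c -> a * c <= b.
Proof.
move=> Hc H; have := Rmult_le_compat_r c _ _ (Rlt_le _ _ Hc) H.
by rewrite /Rdiv Rmult_assoc Rinv_l; lra.
Qed.

Lemma mul_lt_of_lt_div (a b c : R) : 0 < c -> a < b / c -> a * c < b.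
Proof.
move=> Hc H; have := Rmult_lt_compat_r c _ _ Hc H.
by rewrite /Rdiv Rmult_assoc Rinv_l; lra.
Qed.

Lemma sqrt_add_sq_le (d h : R) : 0 <= d -> 0 <= h -> sqrt (d * d + h * h) <= d + h.
Proof. by move=> Hd Hh; rewrite -(sqrt_square (d + h)); [apply: sqrt_le_1_alt; nra | lra]. Qed.

Section EuclideanSpace.
Variable n : nat.
Implicit Types x y z : Rn n.

Lemma vdot_ge0 x : 0 <= vdot x x.
Proof. by apply: sumR_ge0 => i; nra. Qed.

Lemma vnorm_ge0 x : 0 <= vnorm x.
Proof. exact: sqrt_pos. Qed.

Lemma vnorm_sq x : vnorm x * vnorm x = vdot x x.
Proof. exact/sqrt_sqrt/vdot_ge0. Qed.

Lemma vdot_sym x y : vdot x y = vdot y x.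
Proof. by apply: eq_bigr => i _; ring. Qed.

Lemma vdot_vscal a b x y : vdot (vscal a x) (vscal b y) = a * b * vdot x y.
Proof. by rewrite /vdot -sumR_scal; apply: eq_bigr => i _; rewrite /vscal; ring. Qed.

Lemma vdot_comb (a b : R) x y :
  vdot (fun i => a * x i + b * y i) (fun i => a * x i + b * y i) =
  a * a * vdot x x + 2 * a * b * vdot x y + b * b * vdot y y.
Proof.
rewrite /vdot -!sumR_scal -!sumR_add; apply: eq_bigr => i _; ring.
Qed.

Lemma vnorm_scal c x : vnorm (vscal c x) = Rabs c * vnorm x.
Proof.
rewrite /vnorm; have -> : vdot (vscal c x) (vscal c x) = c * c * vdot x x.
  by rewrite /vdot -sumR_scal; apply: eq_bigr => i _; rewrite /vscal; ring.
rewrite sqrt_mult; [|nra|exact: vdot_ge0].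
by rewrite -/(Rsqr c) sqrt_Rsqr_abs.
Qed.

Lemma abs_coord_le_vnorm x i : Rabs (x i) <= vnorm x.
Proof.
rewrite -(sqrt_Rsqr_abs (x i)); apply: sqrt_le_1_alt; rewrite /Rsqr /vdot.
by apply: (sumR_ge_term (f := fun k => x k * x k)) => k; nra.
Qed.

Lemma vnorm_le_sum_abs x : vnorm x <= \big[Rplus/0]_(i < n) Rabs (x i).
Proof.
have H0 : 0 <= \big[Rplus/0]_(i < n) Rabs (x i) by apply: sumR_ge0 => i; exact: Rabs_pos.
rewrite -(sqrt_square _ H0); apply: sqrt_le_1_alt.
have -> : vdot x x = \big[Rplus/0]_(k < n) (Rabs (x k) * Rabs (x k)).
  by apply: eq_bigr => i _; rewrite -Rabs_mult Rabs_right //; nra.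
by apply: sumR_sq_le_sq_sum => k; exact: Rabs_pos.
Qed.

Lemma vnorm_le_coordwise x y : (forall i, Rabs (x i) <= Rabs (y i)) -> vnorm x <= vnorm y.
Proof.
move=> H; apply: sqrt_le_1_alt; apply: sumR_le => i.
by move: (H i); split_Rabs; nra.
Qed.

Lemma vdot_le_vnorm x y : vdot x y <= vnorm x * vnorm y.
Proof.
have zero_dot z w : vnorm z = 0 -> vdot z w = 0.
  move=> Hz; rewrite /vdot big1 // => i _.
  have Ezi : z i = 0.
    by have := abs_coord_le_vnorm z i; rewrite Hz; split_Rabs; lra.
  by rewrite Ezi; ring.
have := vdot_ge0 (fun i => vnorm y * x i + (- vnorm x) * y i).
rewrite vdot_comb -!vnorm_sq.
have Ha := vnorm_ge0 x; have Hb := vnorm_ge0 y.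
have [Ea|Ha'] := Req_dec (vnorm x) 0; first by rewrite zero_dot //; nra.
have [Eb|Hb'] := Req_dec (vnorm y) 0.
  by rewrite vdot_sym zero_dot //; nra.
move=> H; have Hab : 0 < vnorm x * vnorm y by apply: Rmult_lt_0_compat; lra.
nra.
Qed.

Lemma vnorm_add_le x y : vnorm (vadd x y) <= vnorm x + vnorm y.
Proof.
have Hs := Rplus_le_le_0_compat _ _ (vnorm_ge0 x) (vnorm_ge0 y).
rewrite -(sqrt_square _ Hs); apply: sqrt_le_1_alt.
have -> : vdot (vadd x y) (vadd x y) =
    vdot (fun i => 1 * x i + 1 * y i) (fun i => 1 * x i + 1 * y i).
  by apply: eq_bigr => i _; rewrite /vadd; ring.
rewrite vdot_comb -!vnorm_sq; have := vdot_le_vnorm x y; nra.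
Qed.

Lemma vdist_ge0 x y : 0 <= vdist x y.
Proof. exact: vnorm_ge0. Qed.

Lemma vdist_sym x y : vdist x y = vdist y x.
Proof. by rewrite /vdist /vnorm /vdot; congr sqrt; apply: eq_bigr => i _; rewrite /vsub; ring. Qed.

Lemma vdist_refl x : vdist x x = 0.
Proof. by rewrite /vdist /vnorm /vdot big1 ?sqrt_0 // => i _; rewrite /vsub; ring. Qed.

Lemma vdist_triangle x y z : vdist x z <= vdist x y + vdist y z.
Proof.
rewrite /vdist; have -> : vsub x z = vadd (vsub x y) (vsub y z).
  by apply: functional_extensionality => i; rewrite /vadd /vsub; ring.
exact: vnorm_add_le.
Qed.

Lemma vdist_le_vnorm_add x y : vdist x y <= vnorm x + vnorm y.
Proof.
rewrite /vdist; have -> : vsub x y = vadd x (vscal (-1) y).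
  by apply: functional_extensionality => i; rewrite /vsub /vadd /vscal; ring.
by have := vnorm_add_le x (vscal (-1) y); rewrite vnorm_scal Rabs_Ropp Rabs_R1; lra.
Qed.

Lemma abs_coord_sub_le_vdist x y i : Rabs (x i - y i) <= vdist x y.
Proof. exact: (abs_coord_le_vnorm (vsub x y)). Qed.

Lemma vdist_eq0 x y : vdist x y = 0 -> x = y.
Proof.
move=> H; apply: functional_extensionality => i.
have := abs_coord_sub_le_vdist x y i; have := Rabs_pos (x i - y i); rewrite H.
by split_Rabs; lra.
Qed.

Lemma vdist_sq x y : vdist x y * vdist x y = \big[Rplus/0]_(k < n) ((x k - y k) * (x k - y k)).
Proof. exact: vnorm_sq. Qed.

Lemma vdist_vadd_vscal y v t : vdist (vadd y (vscal t v)) y = Rabs t * vnorm v.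
Proof.
rewrite -vnorm_scal /vdist; congr vnorm.
by apply: functional_extensionality => j; rewrite /vsub /vadd /vscal; ring.
Qed.

End EuclideanSpace.

Section Closure.
Variables (n : nat) (Om : Rn n -> Prop).

Lemma closure_of x : Om x -> closure Om x.
Proof. by move=> Ox eps He; exists x; split => //; rewrite vdist_refl. Qed.

Lemma closure_idem x : closure (closure Om) x -> closure Om x.
Proof.
move=> H eps He.
have [y [Cy Hy]] := H (eps / 2) ltac:(lra).
have [z [Oz Hz]] := Cy (eps / 2) ltac:(lra).
by exists z; split => //; have := vdist_triangle z y x; lra.
Qed.

Lemma closure_vnorm_le M x : (forall x, Om x -> vnorm x <= M) -> closure Om x -> vnorm x <= M + 1.
Proof.
move=> HM Cx; have [y [Oy Hy]] := Cx 1 Rlt_0_1.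
have := vnorm_add_le y (vsub x y); have := HM y Oy.
have -> : vadd y (vsub x y) = x by apply: functional_extensionality => i; rewrite /vadd /vsub; ring.
by rewrite vdist_sym in Hy; rewrite -/(vdist x y); lra.
Qed.

End Closure.

Lemma derivable_lim_continuity_pt h z l : derivable_pt_lim h z l -> continuity_pt h z.
Proof. by move=> H; apply: derivable_continuous_pt; exists l. Qed.

Section ContinuityRn.
Variable n : nat.
Implicit Types f g : Rn n -> R.

Definition continuous_Rn f := forall x eps, 0 < eps -> exists delta, 0 < delta /\
  forall y, vdist y x < delta -> Rabs (f y - f x) < eps.

Lemma continuous_Rn_on (U : Rn n -> Prop) f : continuous_Rn f -> continuous_on U f.
Proof.
by move=> H x _ eps He; have [d [Hd Hy]] := H x eps He; exists d; split => // y _; exact: Hy.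
Qed.

Lemma continuous_Rn_ext f g : (forall x, f x = g x) -> continuous_Rn f -> continuous_Rn g.
Proof.
move=> E H x eps He; have [d [Hd Hy]] := H x eps He.
by exists d; split => // y; rewrite -!E; exact: Hy.
Qed.

Lemma continuous_Rn_const c : continuous_Rn (fun _ => c).
Proof. by move=> x eps He; exists 1; split => [|y _]; rewrite ?Rminus_diag ?Rabs_R0; lra. Qed.

Lemma continuous_Rn_coord (k : 'I_n) : continuous_Rn (fun x => x k).
Proof.
by move=> x eps He; exists eps; split => // y Hy; have := abs_coord_sub_le_vdist y x k; lra.
Qed.

Lemma continuous_Rn_comp f (h : R -> R) :
  (forall x, continuity_pt h (f x)) -> continuous_Rn f -> continuous_Rn (fun x => h (f x)).
Proof.
move=> Hh Hf x eps He.
have [a [Ha Hx]] := Hh x eps He.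
have [d [Hd Hy]] := Hf x a Ha.
exists d; split => // y Hyx.
have [->|Hne] := Req_dec (f y) (f x); first by rewrite Rminus_diag Rabs_R0.
by apply: (Hx (f y)); split; [split; [done | exact: not_eq_sym] | exact: Hy].
Qed.

Lemma continuous_Rn_plus f g :
  continuous_Rn f -> continuous_Rn g -> continuous_Rn (fun x => f x + g x).
Proof.
move=> Hf Hg x eps He.
have [d1 [Hd1 H1]] := Hf x (eps / 2) ltac:(lra).
have [d2 [Hd2 H2]] := Hg x (eps / 2) ltac:(lra).
exists (Rmin d1 d2); split => [|y Hy]; first exact: Rmin_pos.
have := H1 y (Rlt_le_trans _ _ _ Hy (Rmin_l _ _)).
have := H2 y (Rlt_le_trans _ _ _ Hy (Rmin_r _ _)).
by split_Rabs; lra.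
Qed.

Lemma continuous_Rn_scal c f : continuous_Rn f -> continuous_Rn (fun x => c * f x).
Proof.
apply: (continuous_Rn_comp (h := fun z => c * z)) => x.
by apply: derivable_lim_continuity_pt; apply: derivable_pt_lim_scal; exact: derivable_pt_lim_id.
Qed.

Lemma continuous_Rn_mult f g :
  continuous_Rn f -> continuous_Rn g -> continuous_Rn (fun x => f x * g x).
Proof.
move=> Hf Hg.
have Hsq z : continuity_pt (fun z => z * z) z.
  apply: derivable_lim_continuity_pt; apply: (derivable_pt_lim_mult id id);
  exact: derivable_pt_lim_id.
(* polarization: f g = ((f + g)^2 - (f - g)^2) / 4 *)
apply: (continuous_Rn_ext (f := fun x =>
  /4 * ((f x + g x) * (f x + g x)) + (- / 4) * ((f x + (-1) * g x) * (f x + (-1) * g x)))).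
  by move=> x; field.
apply: continuous_Rn_plus; apply: continuous_Rn_scal;
  apply: (continuous_Rn_comp (h := fun z => z * z)) => //.
  exact: continuous_Rn_plus.
by apply: continuous_Rn_plus => //; exact: continuous_Rn_scal.
Qed.

Lemma continuous_Rn_sum (I : eqType) (r : seq I) (F : I -> Rn n -> R) :
  (forall k, continuous_Rn (F k)) -> continuous_Rn (fun x => \big[Rplus/0]_(k <- r) F k x).
Proof.
move=> H; elim: r => [|a r IH].
  by apply: (continuous_Rn_ext (f := fun _ => 0)) => [x|]; rewrite ?big_nil //;
    exact: continuous_Rn_const.
apply: (continuous_Rn_ext (f := fun x => F a x + \big[Rplus/0]_(k <- r) F k x)) => [x|].
  by rewrite big_cons.
exact: continuous_Rn_plus.
Qed.

End ContinuityRn.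

Lemma continuous_on_sub n (U : Rn n -> Prop) (u g : Rn n -> R) :
  continuous_on U u -> continuous_Rn g -> continuous_on U (fun x => u x - g x).
Proof.
move=> Hu Hg x Ux eps He.
have [d1 [Hd1 H1]] := Hu x Ux (eps / 2) ltac:(lra).
have [d2 [Hd2 H2]] := Hg x (eps / 2) ltac:(lra).
exists (Rmin d1 d2); split => [|y Uy Hy]; first exact: Rmin_pos.
have := H1 y Uy (Rlt_le_trans _ _ _ Hy (Rmin_l _ _)).
have := H2 y (Rlt_le_trans _ _ _ Hy (Rmin_r _ _)).
by split_Rabs; lra.
Qed.

Section PartialDerivatives.
Variables (n : nat) (i : 'I_n).
Implicit Types f g : Rn n -> R.

Lemma vadd_vscal0 (x v : Rn n) : vadd x (vscal 0 v) = x.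
Proof. by apply: functional_extensionality => j; rewrite /vadd /vscal; ring. Qed.

Lemma has_partial_ext f g x l :
  (forall y, f y = g y) -> has_partial i f x l -> has_partial i g x l.
Proof.
move=> E; rewrite /has_partial.
by have -> : (fun t => g (vadd x (vscal t (ebasis i)))) = (fun t => f (vadd x (vscal t (ebasis i))))
  by apply: functional_extensionality => t; rewrite E.
Qed.

Lemma has_partial_eq f x l l' : has_partial i f x l -> l = l' -> has_partial i f x l'.
Proof. by move=> H <-. Qed.

Lemma has_partial_const c x : has_partial i (fun _ => c) x 0.
Proof. exact: derivable_pt_lim_const. Qed.

Lemma has_partial_coord (k : 'I_n) x : has_partial i (fun y => y k) x (if k == i then 1 else 0).
Proof.
rewrite /has_partial /vadd /vscal /ebasis; set c := (if k == i then 1 else 0).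
have H := derivable_pt_lim_plus (fun _ => x k) (fun t => t * c) 0 0 (1 * c)
  (derivable_pt_lim_const _ _) (derivable_pt_lim_scal_right _ _ _ _ (derivable_pt_lim_id 0)).
by rewrite Rplus_0_l Rmult_1_l in H.
Qed.

Lemma has_partial_plus f g x l1 l2 :
  has_partial i f x l1 -> has_partial i g x l2 -> has_partial i (fun y => f y + g y) x (l1 + l2).
Proof. exact: derivable_pt_lim_plus. Qed.

Lemma has_partial_mult f g x l1 l2 :
  has_partial i f x l1 -> has_partial i g x l2 ->
  has_partial i (fun y => f y * g y) x (l1 * g x + f x * l2).
Proof.
move=> H1 H2; have := derivable_pt_lim_mult _ _ _ _ _ H1 H2.
by rewrite /= vadd_vscal0.
Qed.

Lemma has_partial_scal c f x l : has_partial i f x l -> has_partial i (fun y => c * f y) x (c * l).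
Proof.
move=> H; apply: has_partial_eq; first exact: (has_partial_mult (has_partial_const c x) H).
by rewrite Rmult_0_l Rplus_0_l.
Qed.

Lemma has_partial_comp f (h : R -> R) x lh l :
  derivable_pt_lim h (f x) lh -> has_partial i f x l -> has_partial i (fun y => h (f y)) x (lh * l).
Proof.
move=> Hh Hf; rewrite -(vadd_vscal0 x (ebasis i)) in Hh.
exact: (derivable_pt_lim_comp _ _ _ _ _ Hf Hh).
Qed.

Lemma has_partial_sum (I : eqType) (r : seq I) (F : I -> Rn n -> R) (L : I -> R) x :
  (forall k, has_partial i (F k) x (L k)) ->
  has_partial i (fun y => \big[Rplus/0]_(k <- r) F k y) x (\big[Rplus/0]_(k <- r) L k).
Proof.
move=> H; elim: r => [|a r IH].
  by rewrite big_nil; apply: (has_partial_ext (f := fun _ => 0)) => [y|]; rewrite ?big_nil //;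
    exact: has_partial_const.
rewrite big_cons; apply: (has_partial_ext (f := fun y => F a y + \big[Rplus/0]_(k <- r) F k y)).
  by move=> y; rewrite big_cons.
exact: has_partial_plus.
Qed.

End PartialDerivatives.

Lemma C2_data_sub n (U V : Rn n -> Prop) phi Dphi D2phi :
  (forall x, U x -> V x) -> C2_data V phi Dphi D2phi -> C2_data U phi Dphi D2phi.
Proof.
move=> HUV; have cont_sub f : continuous_on V f -> continuous_on U f.
  move=> Hf x Ux eps He; have [d [Hd H]] := Hf x (HUV x Ux) eps He.
  by exists d; split => // y Uy; exact/H/HUV.
move=> [Hc [HD [HDc [HD2 HD2c]]]].
split; first exact: cont_sub.
split; first by move=> i x Ux; exact/HD/HUV.
split; first by move=> i; exact: cont_sub.
split; first by move=> i j x Ux; exact/HD2/HUV.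
by move=> i j; exact: cont_sub.
Qed.

(** * Continuous functions attain their maximum on closed bounded sets *)

Lemma halving_small (C d : R) : 0 <= C -> 0 < d -> exists m : nat, C / 2 ^ m < d.
Proof.
move=> HC Hd.
have [m Hm] := pow_lt_1_zero (/ 2) ltac:(rewrite Rabs_right; lra) (d / (C + 1))
  ltac:(apply: Rdiv_lt_0_compat; lra).
have := Hm m (le_n m); rewrite Rabs_right; last by apply: Rle_ge; apply: pow_le; lra.
rewrite pow_inv => H; exists m.
have Hp : 0 < / 2 ^ m by apply: Rinv_0_lt_compat; apply: pow_lt; lra.
have := Rmult_lt_compat_l (C + 1) _ _ ltac:(lra) H.
have -> : (C + 1) * (d / (C + 1)) = d by field; lra.
rewrite /Rdiv; nra.
Qed.

Lemma nested_intervals (a b : nat -> R) :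
  (forall m, a m <= a m.+1) -> (forall m, b m.+1 <= b m) -> (forall m, a m <= b m) ->
  {p | forall m, a m <= p <= b m}.
Proof.
move=> Ha Hb Hab.
have a_mono := homo_leq Rle_refl (fun y x z => @Rle_trans x y z) Ha.
have b_mono := homo_leq (r := fun x y => y <= x) Rle_refl
  (fun y x z Hxy Hyz => Rle_trans _ _ _ Hyz Hxy) Hb.
have a_le_b m k : a m <= b k.
  have [Hmk|Hkm] := leqP m k; first exact: Rle_trans (a_mono _ _ Hmk) (Hab k).
  exact: Rle_trans (Hab m) (b_mono _ _ (ltnW Hkm)).
have Hbound : bound (fun r => exists m, r = a m) by exists (b 0%N) => r [m ->]; exact: a_le_b.
have [p [Hub Hlub]] := completeness _ Hbound (ex_intro _ (a 0%N) (ex_intro _ 0%N erefl)).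
exists p => m; split; first by apply: Hub; exists m.
by apply: Hlub => r [k ->].
Qed.

(* Bolzano-Weierstrass by bisection: always keep a half-box in which sup f is still
   approached; the boxes shrink to a point of the closed set K where f attains sup f. *)
Section Bisection.
Variables (n : nat) (K : Rn n -> Prop) (f : Rn n -> R) (S : R).
Implicit Types b : Rn n * Rn n.

Definition in_box b (x : Rn n) := forall i, b.1 i <= x i <= b.2 i.

Definition sup_approached b :=
  forall eps, 0 < eps -> exists x, K x /\ in_box b x /\ S - eps < f x.

Definition lower_half (i : 'I_n) b : Rn n * Rn n :=
  (b.1, fun j => if j == i then (b.1 j + b.2 j) / 2 else b.2 j).
Definition upper_half (i : 'I_n) b : Rn n * Rn n :=
  (fun j => if j == i then (b.1 j + b.2 j) / 2 else b.1 j, b.2).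

Definition halve_box (i : 'I_n) b :=
  if excluded_middle_informative (sup_approached (lower_half i b)) then lower_half i b
  else upper_half i b.

Definition bisect_box b := foldl (fun b i => halve_box i b) b (enum 'I_n).

Lemma sup_approached_halve i b : sup_approached b -> sup_approached (halve_box i b).
Proof.
rewrite /halve_box; case: excluded_middle_informative => [//|Hlo Hb].
move=> eps He; apply: NNPP => Hhi; apply: (Hlo) => e1 He1; apply: NNPP => Hlo1.
have [x [Kx [Bx Fx]]] := Hb (Rmin eps e1) (Rmin_pos _ _ He He1).
have := Rmin_l eps e1; have := Rmin_r eps e1; have := Bx i.
have [Hxi|Hxi] := Rle_lt_dec (x i) ((b.1 i + b.2 i) / 2) => Hi H1 H2.
- apply: Hlo1; exists x; split => //; split; last lra.
  by move=> j; rewrite /lower_half /=; case: eqP => [->|_]; have := Bx j; lra.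
- apply: Hhi; exists x; split => //; split; last lra.
  by move=> j; rewrite /upper_half /=; case: eqP => [->|_]; have := Bx j; lra.
Qed.

Lemma halve_box_shrinks i b j : b.1 j <= b.2 j ->
  b.1 j <= (halve_box i b).1 j /\ (halve_box i b).2 j <= b.2 j /\
  (halve_box i b).2 j - (halve_box i b).1 j = (b.2 j - b.1 j) / (if j == i then 2 else 1).
Proof.
move=> Hj; rewrite /halve_box; case: excluded_middle_informative => ?;
  by rewrite /lower_half /upper_half /=; case: eqP => _; do !split; lra.
Qed.

Lemma foldl_halve_box (s : seq 'I_n) b : (forall j, b.1 j <= b.2 j) -> sup_approached b ->
  let b' := foldl (fun b i => halve_box i b) b s in
  sup_approached b' /\ forall j, b.1 j <= b'.1 j /\ b'.2 j <= b.2 j /\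
    b'.2 j - b'.1 j = (b.2 j - b.1 j) / 2 ^ count_mem j s.
Proof.
elim: s b => [|i s IH] b Hb Hsup /=.
  by split => // j; do !split; rewrite ?Rdiv_1_r; lra.
have Hhalf j := halve_box_shrinks i (Hb j).
have Hb' j : (halve_box i b).1 j <= (halve_box i b).2 j.
  by have [_ [_ E]] := Hhalf j; have := Hb j; case: (j == i) E; lra.
have [Hsup' Hs] := IH _ Hb' (sup_approached_halve i Hsup).
split => // j; have [B1 [B2 ->]] := Hs j; have [A1 [A2 ->]] := Hhalf j.
do !split; try lra.
rewrite eq_sym; case: (i == j) => /=; rewrite add0n /=; field; apply: pow_nonzero; lra.
Qed.

Lemma bisect_box_shrinks b : (forall j, b.1 j <= b.2 j) -> sup_approached b ->
  sup_approached (bisect_box b) /\ forall j, b.1 j <= (bisect_box b).1 j /\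
    (bisect_box b).2 j <= b.2 j /\ (bisect_box b).2 j - (bisect_box b).1 j = (b.2 j - b.1 j) / 2.
Proof.
move=> Hb Hsup; have [Hsup' Hs] := foldl_halve_box (enum 'I_n) Hb Hsup.
split => // j; have [? [? E]] := Hs j; do !split => //.
by rewrite E count_uniq_mem ?enum_uniq // mem_enum /= Rmult_1_r.
Qed.

Lemma bisection_limit b0 : (forall j, b0.1 j <= b0.2 j) -> sup_approached b0 ->
  exists p : Rn n, forall m,
    sup_approached (iter m bisect_box b0) /\ in_box (iter m bisect_box b0) p /\
    forall j, (iter m bisect_box b0).2 j - (iter m bisect_box b0).1 j = (b0.2 j - b0.1 j) / 2 ^ m.
Proof.
move=> Hb0 Hsup0; set bs := fun m => iter m bisect_box b0.
have width_ge0 m j : 0 <= (b0.2 j - b0.1 j) / 2 ^ m.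
  by apply: Rmult_le_pos; [have := Hb0 j; lra | left; apply/Rinv_0_lt_compat/pow_lt; lra].
have Hinv m : sup_approached (bs m) /\
    forall j, (bs m).2 j - (bs m).1 j = (b0.2 j - b0.1 j) / 2 ^ m.
  elim: m => [|m [Hsup Hw]]; first by split => // j /=; field.
  have Hb j : (bs m).1 j <= (bs m).2 j by have := Hw j; have := width_ge0 m j; lra.
  have [Hsup' Hs] := bisect_box_shrinks Hb Hsup.
  rewrite /bs iterS; split => // j; have [_ [_ ->]] := Hs j.
  by rewrite Hw /=; field; apply: pow_nonzero; lra.
have Hord m j : (bs m).1 j <= (bs m).2 j.
  by have := (Hinv m).2 j; have := width_ge0 m j; lra.
have Hstep m j : (bs m).1 j <= (bs m.+1).1 j /\ (bs m.+1).2 j <= (bs m).2 j.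
  have [_ Hs] := bisect_box_shrinks (Hord m) (Hinv m).1.
  by rewrite /bs iterS; have [? [? _]] := Hs j.
exists (fun j => sval (nested_intervals (fun m => proj1 (Hstep m j)) (fun m => proj2 (Hstep m j))
  (fun m => Hord m j))).
move=> m; split; first exact: (Hinv m).1.
split => [j|]; last exact: (Hinv m).2.
by case: (nested_intervals _ _ _) => p Hp /=; exact: Hp.
Qed.

End Bisection.

Lemma continuous_attains_max n (K : Rn n -> Prop) (f : Rn n -> R) (M : R) :
  (forall x, K x -> forall i, Rabs (x i) <= M) -> (forall x, closure K x -> K x) ->
  (exists x, K x) -> continuous_on K f -> (exists B, forall x, K x -> f x <= B) ->
  exists y, K y /\ forall x, K x -> f x <= f y.
Proof.
move=> HM Hcl [x0 Kx0] Hc [B HB].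
have [S [HS1 HS2]] : {S | is_lub (fun r => exists x, K x /\ r = f x) S}.
  apply: completeness; first by exists B => r [x [Kx ->]]; exact: HB.
  by exists (f x0), x0.
pose b0 : Rn n * Rn n := (fun _ => - M, fun _ => M).
have HM0 : 0 <= INR n * (2 * M).
  have [->|Hn] := eqVneq n 0%N; first by rewrite Rmult_0_l; lra.
  have Hn' : (0 < n)%N by rewrite lt0n.
  have := HM x0 Kx0 (Ordinal Hn'); have := Rabs_pos (x0 (Ordinal Hn')).
  by have := pos_INR n; nra.
have Hb0 j : b0.1 j <= b0.2 j by rewrite /=; have := HM x0 Kx0 j; split_Rabs; lra.
have Hsup0 : sup_approached K f S b0.
  move=> eps He; apply: NNPP => Hno.
  suff Hle : S <= S - eps by lra.
  apply: HS2 => r [x [Kx ->]]; apply: Rnot_lt_le => Hlt; apply: Hno.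
  exists x; split => //; split; last lra.
  by move=> i /=; have := HM x Kx i; split_Rabs; lra.
have [p Hp] := bisection_limit Hb0 Hsup0.
have close_to_p m x :
    in_box (iter m (bisect_box K f S) b0) x -> vdist x p <= INR n * (2 * M) / 2 ^ m.
  move=> Hx; apply: Rle_trans (vnorm_le_sum_abs _) _.
  rewrite /Rdiv Rmult_assoc -sumR_const; apply: sumR_le => j.
  have [_ [Hpm Hw]] := Hp m; have := Hw j; have := Hx j; have := Hpm j.
  rewrite /= (_ : M - - M = 2 * M); last ring.
  by rewrite /vsub /Rdiv; split_Rabs; lra.
have Kp : K p.
  apply: Hcl => eps He; have [m Hm] := halving_small HM0 He.
  have [x [Kx [Bx _]]] := (Hp m).1 1 Rlt_0_1.
  by exists x; split => //; have := close_to_p m x Bx; lra.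
exists p; split => // x Kx.
apply: Rle_trans (_ : S <= _); first by apply: HS1; exists x.
apply: Rnot_lt_le => Hlt.
have He : 0 < (S - f p) / 2 by lra.
have [d [Hd Hnear]] := Hc p Kp _ He.
have [m Hm] := halving_small HM0 Hd.
have [y [Ky [By Fy]]] := (Hp m).1 _ He.
by have := Hnear y Ky (Rle_lt_trans _ _ _ (close_to_p m y By) Hm); split_Rabs; lra.
Qed.

Section CoordinateLines.
Variables (n : nat) (rho : Rn n -> R) (k : 'I_n) (Dk : Rn n -> R).

Lemma has_partial_line (p : Rn n) s0 :
  has_partial k rho (vadd p (vscal s0 (ebasis k))) (Dk (vadd p (vscal s0 (ebasis k)))) ->
  derivable_pt_lim (fun s => rho (vadd p (vscal s (ebasis k)))) s0
    (Dk (vadd p (vscal s0 (ebasis k)))).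
Proof.
have shift t :
    vadd (vadd p (vscal s0 (ebasis k))) (vscal t (ebasis k)) = vadd p (vscal (s0 + t) (ebasis k)).
  by apply: functional_extensionality => j; rewrite /vadd /vscal; ring.
move=> H eps He; have [d Hd] := H eps He; exists d => t Ht0 Ht.
by have := Hd t Ht0 Ht; rewrite Rplus_0_l !shift Rplus_0_r.
Qed.

Lemma mvt_coord (p : Rn n) h :
  (forall s, Rabs s <= Rabs h ->
     has_partial k rho (vadd p (vscal s (ebasis k))) (Dk (vadd p (vscal s (ebasis k))))) ->
  exists c, Rabs c <= Rabs h /\
    rho (vadd p (vscal h (ebasis k))) - rho p = h * Dk (vadd p (vscal c (ebasis k))).
Proof.
move=> H.
pose g s := rho (vadd p (vscal s (ebasis k))).
pose g' s := Dk (vadd p (vscal s (ebasis k))).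
have Hg s : Rabs s <= Rabs h -> derivable_pt_lim g s (g' s) by move/H; exact: has_partial_line.
have -> : rho p = g 0 by rewrite /g vadd_vscal0.
have [Hh|[<-|Hh]] := Rtotal_order 0 h.
- have [c [Ec Hc]] := MVT_cor2 g g' _ _ Hh (fun c Hc => Hg c ltac:(split_Rabs; lra)).
  by exists c; split; [split_Rabs; lra | rewrite Ec /g'; ring].
- by exists 0; split; [lra | rewrite /g vadd_vscal0; ring].
- have [c [Ec Hc]] := MVT_cor2 g g' _ _ Hh (fun c Hc => Hg c ltac:(split_Rabs; lra)).
  exists c; split; first by split_Rabs; lra.
  by rewrite -[g h - g 0]Ropp_involutive Ropp_minus_distr Ec /g'; ring.
Qed.

End CoordinateLines.

(* Continuous partial derivatives make rho differentiable at y: move the coordinates of y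
   one at a time and apply the mean value theorem on each coordinate segment. *)
Section FirstOrderExpansion.
Variables (n : nat) (rho : Rn n -> R) (D : 'I_n -> Rn n -> R) (y v : Rn n) (r : R).
Hypotheses (Hr : 0 < r) (HD : forall i x, ball y r x -> has_partial i rho x (D i x))
  (HDc : forall i, continuous_on (ball y r) (D i)).

Definition partial_path (k : nat) (t : R) : Rn n :=
  fun j => y j + (if (j < k)%N then t * v j else 0).

Definition partial_slope (k : nat) : R :=
  \big[Rplus/0]_(i < n) (if (i < k)%N then D i y * v i else 0).

Definition expansion_holds (k : nat) := forall eps, 0 < eps -> exists tau, 0 < tau /\
  forall t, 0 < t < tau -> Rabs (rho (partial_path k t) - rho y - t * partial_slope k) <= eps * t.

Lemma ltnS_eq_ord (i kk : 'I_n) : (i < kk.+1)%N = (i == kk) || (i < kk)%N.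
Proof. by rewrite ltnS leq_eqVlt. Qed.

Lemma partial_path_succ (kk : 'I_n) t :
  partial_path kk.+1 t = vadd (partial_path kk t) (vscal (t * v kk) (ebasis kk)).
Proof.
apply: functional_extensionality => j; rewrite /partial_path /vadd /vscal /ebasis ltnS_eq_ord.
by case: eqP => [->|_] /=; rewrite ?ltnn; case: (j < kk)%N; ring.
Qed.

Lemma partial_slope_succ (kk : 'I_n) : partial_slope kk.+1 = partial_slope kk + D kk y * v kk.
Proof.
rewrite /partial_slope -[D kk y * v kk](sumR_delta (fun i => D i y * v i)) -sumR_add.
apply: eq_bigr => i _; rewrite ltnS_eq_ord.
by case: eqP => [->|_] /=; rewrite ?ltnn; case: (i < kk)%N; ring.
Qed.

Lemma partial_path_near (kk : 'I_n) t s : 0 <= t -> Rabs s <= Rabs (t * v kk) ->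
  vdist (vadd (partial_path kk t) (vscal s (ebasis kk))) y <= t * vnorm v.
Proof.
move=> Ht Hs; apply: Rle_trans (_ : _ <= vnorm (vscal t v)) _; last first.
  by rewrite vnorm_scal Rabs_right; lra.
apply: vnorm_le_coordwise => j; rewrite /vsub /vadd /vscal /partial_path /ebasis.
have [->|_] := eqVneq j kk.
  by rewrite ltnn (_ : y kk + 0 + s * 1 - y kk = s) //; ring.
have -> : y j + (if (j < kk)%N then t * v j else 0) + s * 0 - y j =
          if (j < kk)%N then t * v j else 0 by case: (j < kk)%N; ring.
by case: (j < kk)%N; rewrite ?Rabs_R0; [lra | exact: Rabs_pos].
Qed.

Lemma expansion_holds0 : expansion_holds 0.
Proof.
move=> eps He; exists 1; split => [|t Ht]; first lra.
have -> : partial_path 0 t = y.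
  by apply: functional_extensionality => j; rewrite /partial_path /=; ring.
have -> : partial_slope 0 = 0 by rewrite /partial_slope big1.
by rewrite Rmult_0_r Rminus_diag Rminus_0_r Rabs_R0; nra.
Qed.

Lemma partial_path_step_error (kk : 'I_n) t d eta : 0 <= t -> t * vnorm v < Rmin d r ->
  (forall z, ball y r z -> vdist z y < d -> Rabs (D kk z - D kk y) < eta) ->
  Rabs (rho (partial_path kk.+1 t) - rho (partial_path kk t) - t * (D kk y * v kk))
    <= t * Rabs (v kk) * eta.
Proof.
move=> Ht HtV Hnear.
have near_y s : Rabs s <= Rabs (t * v kk) ->
    vdist (vadd (partial_path kk t) (vscal s (ebasis kk))) y < Rmin d r.
  by move=> Hs; have := partial_path_near Ht Hs; lra.
have [c [Hc Ec]] := mvt_coord (Dk := D kk) (p := partial_path kk t) (h := t * v kk)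
  (fun s Hs => HD kk (Rlt_le_trans _ _ _ (near_y s Hs) (Rmin_r _ _))).
have := Hnear _ (Rlt_le_trans _ _ _ (near_y c Hc) (Rmin_r _ _))
  (Rlt_le_trans _ _ _ (near_y c Hc) (Rmin_l _ _)).
rewrite partial_path_succ; set Dc := D kk _ in Ec * => Hclose.
have -> : rho (vadd (partial_path kk t) (vscal (t * v kk) (ebasis kk))) - rho (partial_path kk t)
    - t * (D kk y * v kk) = t * v kk * (Dc - D kk y) by lra.
rewrite !Rabs_mult (Rabs_right t); last lra.
by apply: Rmult_le_compat_l; [apply: Rmult_le_pos; [lra | exact: Rabs_pos] | lra].
Qed.

Lemma expansion_holds_succ (kk : 'I_n) : expansion_holds kk -> expansion_holds kk.+1.
Proof.
move=> IH eps He.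
pose A := Rabs (v kk).
have HA : 0 <= A by exact: Rabs_pos.
have HV := vnorm_ge0 v.
have [t1 [Ht1 H1]] := IH (eps / 2) ltac:(lra).
have Hyb : ball y r y by rewrite /ball vdist_refl.
have He2 : 0 < eps / (2 * (A + 1)) by apply: Rdiv_lt_0_compat; lra.
have [d [Hd Hdc]] := @HDc kk y Hyb _ He2.
have Hdr : 0 < Rmin d r by exact: Rmin_pos.
exists (Rmin t1 (Rmin d r / (vnorm v + 1))); split => [|t [Ht0 Ht]].
  by apply: Rmin_pos => //; apply: Rdiv_lt_0_compat; lra.
have Htt1 : t < t1 by apply: Rlt_le_trans Ht (Rmin_l _ _).
have HtV : t * vnorm v < Rmin d r.
  have := mul_lt_of_lt_div (ltac:(lra) : 0 < vnorm v + 1) (Rlt_le_trans _ _ _ Ht (Rmin_r _ _)).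
  nra.
have := partial_path_step_error (Rlt_le _ _ Ht0) HtV Hdc.
have := H1 t (conj Ht0 Htt1).
rewrite partial_slope_succ.
have HAe : A * (eps / (2 * (A + 1))) <= eps / 2.
  apply: (Rmult_le_reg_r (2 * (A + 1))); first lra.
  have -> : A * (eps / (2 * (A + 1))) * (2 * (A + 1)) = A * eps by field; lra.
  nra.
have : t * A * (eps / (2 * (A + 1))) <= t * (eps / 2).
  by rewrite Rmult_assoc; apply: Rmult_le_compat_l; lra.
rewrite -/A; split_Rabs; lra.
Qed.

Lemma expansion_holds_full : expansion_holds n.
Proof.
suff H k : (k <= n)%N -> expansion_holds k by exact: H.
elim: k => [_|k IH Hk]; first exact: expansion_holds0.
exact: (@expansion_holds_succ (Ordinal Hk) (IH (ltnW Hk))).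
Qed.

Lemma directional_derivative_nonpos :
  (exists T, 0 < T /\ forall t, 0 < t < T -> rho (vadd y (vscal t v)) <= rho y) ->
  vdot (fun i => D i y) v <= 0.
Proof.
move=> [T [HT Hdec]]; apply: Rnot_lt_le => Hpos.
have Hpath t : partial_path n t = vadd y (vscal t v).
  by apply: functional_extensionality => j; rewrite /partial_path /vadd /vscal ltn_ord.
have Hslope : partial_slope n = vdot (fun i => D i y) v.
  by apply: eq_bigr => i _; rewrite ltn_ord.
have [tau [Htau Hexp]] := expansion_holds_full (ltac:(lra) : 0 < vdot (fun i => D i y) v / 2).
have Hmin := Rmin_pos _ _ Htau HT.
have Ht : 0 < Rmin tau T / 2 < tau by have := Rmin_l tau T; lra.
have Ht' : 0 < Rmin tau T / 2 < T by have := Rmin_r tau T; lra.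
have := Hexp _ Ht; have := Hdec _ Ht'.
rewrite Hpath Hslope; move: (Rmin tau T / 2) (vdot _ v) Ht Hpos => t L [Ht0 _] HL.
have HtL : 0 < t * L by exact: Rmult_lt_0_compat.
split_Rabs; nra.
Qed.

End FirstOrderExpansion.

(** * The defining function near the boundary of a convex domain *)

Lemma convex_segment_interior n (Om : Rn n -> Prop) (y z : Rn n) (rho0 t : R) :
  is_convex Om -> closure Om y -> 0 < rho0 -> (forall w, vdist w z < rho0 -> Om w) -> 0 < t <= 1 ->
  Om (vadd y (vscal t (vsub z y))).
Proof.
move=> Hcv Hcl Hr0 Hz Ht.
have [y' [Oy' Hy']] := Hcl (rho0 * t) ltac:(nra).
(* chosen so that [y + t (z - y) = y' + t (z' - y')] *)
pose z' := vadd z (vscal ((1 - t) / t) (vsub y y')).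
have Hc : 0 <= (1 - t) / t by apply: Rmult_le_pos; [lra | left; apply: Rinv_0_lt_compat; lra].
have Oz' : Om z'.
  apply: Hz; rewrite vdist_vadd_vscal Rabs_right -/(vdist y y'); last lra.
  rewrite vdist_sym in Hy'.
  apply: Rle_lt_trans (_ : (1 - t) / t * (rho0 * t) < _).
    by apply: Rmult_le_compat_l; lra.
  by rewrite (_ : (1 - t) / t * (rho0 * t) = (1 - t) * rho0); [nra | field; lra].
have := Hcv y' z' t Oy' Oz' ltac:(lra).
congr Om; apply: functional_extensionality => i.
by rewrite /z' /vadd /vscal /vsub; field; lra.
Qed.

Lemma smooth_partials_continuous n (U : Rn n -> Prop) rho (D : 'I_n -> Rn n -> R) :
  smooth_on U rho -> (forall i x, U x -> has_partial i rho x (D i x)) ->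
  forall i, continuous_on U (D i).
Proof.
move=> Hs HD i x Ux eps He.
have [_ [g [Hg Hgc]]] := Hs 1%nat.
have E x' : U x' -> D i x' = g i x'.
  by move=> Ux'; exact: uniqueness_limite (HD i x' Ux') (Hg i x' Ux').
have [d [Hd H]] := (Hgc i).1 x Ux eps He.
by exists d; split => // x' Ux' Hx'; rewrite !E //; exact: H.
Qed.

Lemma ball_beyond_center n (Om : Rn n -> Prop) (x0 g : Rn n) rho0 : 0 < rho0 ->
  (forall w, vdist w x0 < rho0 -> Om w) ->
  exists th, 0 < th /\ forall w, vdist w (vadd x0 (vscal th g)) < rho0 / 2 -> Om w.
Proof.
move=> Hr0 Hb0; have Hg := vnorm_ge0 g.
have Hth : 0 < rho0 / (2 * (vnorm g + 1)) by apply: Rdiv_lt_0_compat; lra.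
have Hthg : rho0 / (2 * (vnorm g + 1)) * vnorm g < rho0 / 2.
  rewrite (_ : _ * vnorm g = rho0 * vnorm g / (2 * (vnorm g + 1))); last by field; lra.
  by apply: div_lt_of_lt_mul; nra.
move: (rho0 / _) Hth Hthg => th Hth Hthg.
exists th; split => // w Hw; apply: Hb0.
apply: Rle_lt_trans (vdist_triangle w (vadd x0 (vscal th g)) x0) _.
by rewrite vdist_vadd_vscal Rabs_right; lra.
Qed.

Lemma defining_function_decreases_inward n (Om : Rn n -> Prop) (y z : Rn n) r rho Drho s :
  is_convex Om -> ~ Om y -> closure Om y -> local_defining Om y r rho Drho -> 0 < s ->
  (forall w, vdist w z < s -> Om w) -> vdot (fun i => Drho i y) (vsub z y) <= 0.
Proof.
move=> Hcv Ny Cy [Hr [Hsm [HD [Hiff _]]]] Hs Hz.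
have Hyb : ball y r y by rewrite /ball vdist_refl.
have Hry : 0 <= rho y by apply: Rnot_lt_le => H; apply/Ny/(Hiff y Hyb).
have Hv := vnorm_ge0 (vsub z y).
apply: (directional_derivative_nonpos Hr HD (smooth_partials_continuous Hsm HD)).
exists (Rmin 1 (r / (vnorm (vsub z y) + 1))); split => [|t [Ht0 Ht]].
  by apply: Rmin_pos; [lra | apply: Rdiv_lt_0_compat; lra].
have Hpb : ball y r (vadd y (vscal t (vsub z y))).
  rewrite /ball vdist_vadd_vscal Rabs_right; last lra.
  have := mul_lt_of_lt_div (ltac:(lra) : 0 < vnorm (vsub z y) + 1)
    (Rlt_le_trans _ _ _ Ht (Rmin_r _ _)).
  nra.
have Op : Om (vadd y (vscal t (vsub z y))).
  apply: (convex_segment_interior Hcv Cy Hs Hz).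
  by have := Rmin_l 1 (r / (vnorm (vsub z y) + 1)); lra.
by have := proj1 (Hiff _ Hpb) Op; lra.
Qed.

(* With g = Drho(y) and z = x0 + th g in Om: 0 >= g.(z - y) = th |g|^2 - g.(y - x0). *)
Lemma gradient_points_outward n (Om : Rn n -> Prop) (x0 y : Rn n) r rho Drho :
  is_open Om -> is_convex Om -> Om x0 -> ~ Om y -> closure Om y ->
  local_defining Om y r rho Drho ->
  0 < vdot (fun i => Drho i y) (vsub y x0).
Proof.
move=> Hop Hcv Ox0 Ny Cy Hld.
have [rho0 [Hr0 Hb0]] := Hop x0 Ox0.
pose g : Rn n := fun i => Drho i y.
have Hg2 : 0 < vdot g g.
  have [_ [_ [_ [_ [i0 Hi0]]]]] := Hld.
  apply: Rlt_le_trans (_ : g i0 * g i0 <= _); first by have : g i0 <> 0 by []; nra.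
  by apply: (sumR_ge_term (f := fun k => g k * g k)) => k; nra.
have [th [Hth Hball]] := ball_beyond_center g Hr0 Hb0.
have := defining_function_decreases_inward Hcv Ny Cy Hld (ltac:(lra) : 0 < rho0 / 2) Hball.
have -> : vdot g (vsub (vadd x0 (vscal th g)) y) = th * vdot g g + (-1) * vdot g (vsub y x0).
  rewrite /vdot -!sumR_scal -sumR_add; apply: eq_bigr => i _.
  by rewrite /vsub /vadd /vscal; ring.
by move=> Hle; change (0 < vdot g (vsub y x0)); nra.
Qed.

(** * The test function *)

Section SquaredDistance.
Variable n : nat.
Implicit Types a x : Rn n.

Definition sqdist a x : R := \big[Rplus/0]_(k < n) ((x k - a k) * (x k - a k)).

Lemma sqdist_ge0 a x : 0 <= sqdist a x.
Proof. by apply: sumR_ge0 => k; exact: Rle_0_sqr. Qed.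

Lemma sqdist_vdist a x : sqdist a x = vdist x a * vdist x a.
Proof. by rewrite vdist_sq. Qed.

Lemma sqdist_refl a : sqdist a a = 0.
Proof. by rewrite /sqdist big1 // => k _; ring. Qed.

Lemma has_partial_coord_sub (j k : 'I_n) a x :
  has_partial j (fun x : Rn n => x k - a k) x (if k == j then 1 else 0).
Proof.
apply: has_partial_eq.
  exact: (has_partial_plus (has_partial_coord j k x) (has_partial_const j (- a k) x)).
ring.
Qed.

Lemma has_partial_sqdist j a x : has_partial j (sqdist a) x (2 * (x j - a j)).
Proof.
apply: has_partial_eq.
  apply: (@has_partial_sum _ j _ (index_enum 'I_n) (fun k x => (x k - a k) * (x k - a k))) => k.
  exact: has_partial_mult (has_partial_coord_sub j k a x) (has_partial_coord_sub j k a x).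
rewrite -(sumR_delta (fun k => 2 * (x k - a k)) j); apply: eq_bigr => k _.
by case: (k == j); ring.
Qed.

Lemma continuous_Rn_coord_sub a (k : 'I_n) : continuous_Rn (fun x : Rn n => x k - a k).
Proof. exact: (continuous_Rn_plus (continuous_Rn_coord k) (@continuous_Rn_const n (- a k))). Qed.

Lemma continuous_Rn_sqdist a : continuous_Rn (sqdist a).
Proof.
apply: (@continuous_Rn_sum _ _ (index_enum 'I_n) (fun k x => (x k - a k) * (x k - a k))) => k.
exact: continuous_Rn_mult (continuous_Rn_coord_sub a k) (continuous_Rn_coord_sub a k).
Qed.

End SquaredDistance.

Lemma derivable_pt_lim_sqrt_shift e z : 0 < z + e ->
  derivable_pt_lim (fun z => sqrt (z + e)) z (/ (2 * sqrt (z + e))).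
Proof.
move=> H.
have Hlin : derivable_pt_lim (fun z => z + e) z 1.
  have := derivable_pt_lim_plus id (fun _ => e) z 1 0
    (derivable_pt_lim_id z) (derivable_pt_lim_const e z).
  by rewrite Rplus_0_r.
by have := derivable_pt_lim_comp _ _ _ _ _ Hlin (derivable_pt_lim_sqrt _ H); rewrite Rmult_1_r.
Qed.

Lemma derivable_pt_lim_inv_sqrt_shift A e z : 0 < z + e ->
  derivable_pt_lim (fun z => A / sqrt (z + e)) z (- A / (2 * ((z + e) * sqrt (z + e)))).
Proof.
move=> H; have Hs : 0 < sqrt (z + e) by apply: sqrt_lt_R0.
have := derivable_pt_lim_div (fun _ => A) (fun z => sqrt (z + e)) z 0 _
  (derivable_pt_lim_const A z) (derivable_pt_lim_sqrt_shift H) ltac:(simpl; lra).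
have Hss : sqrt (z + e) * sqrt (z + e) = z + e by apply: sqrt_sqrt; lra.
congr derivable_pt_lim; rewrite /Rsqr; set s := sqrt (z + e) in Hss Hs *.
by rewrite -Hss; field; lra.
Qed.

Section TestFunction.
Variables (n : nat) (A e ep C : R) (x0 y : Rn n).
Hypothesis He : 0 < e.

Definition cone (x : Rn n) : R := A * sqrt (sqdist x0 x + e) - ep * sqdist x0 x.

(* The quartic term is flat to second order at y and makes y a strict contact point. *)
Definition test_fun (x : Rn n) : R := cone x + C + sqdist y x * sqdist y x.

Definition test_grad (i : 'I_n) (x : Rn n) : R :=
  (A / sqrt (sqdist x0 x + e) - 2 * ep) * (x i - x0 i) + 4 * sqdist y x * (x i - y i).

Definition test_hess (i j : 'I_n) (x : Rn n) : R :=
  - A / ((sqdist x0 x + e) * sqrt (sqdist x0 x + e)) * (x j - x0 j) * (x i - x0 i)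
  + (A / sqrt (sqdist x0 x + e) - 2 * ep) * (if i == j then 1 else 0)
  + 8 * (x j - y j) * (x i - y i) + 4 * sqdist y x * (if i == j then 1 else 0).

Let shift_pos x : 0 < sqdist x0 x + e.
Proof. by have := sqdist_ge0 x0 x; lra. Qed.

Lemma has_partial_test_fun j x : has_partial j test_fun x (test_grad j x).
Proof.
have Hs : 0 < sqrt (sqdist x0 x + e) by apply/sqrt_lt_R0/shift_pos.
have H1 := has_partial_scal A (has_partial_comp
  (derivable_pt_lim_sqrt_shift (shift_pos x)) (has_partial_sqdist j x0 x)).
have H2 := has_partial_scal (- ep) (has_partial_sqdist j x0 x).
have H3 := has_partial_mult (has_partial_sqdist j y x) (has_partial_sqdist j y x).
have H := has_partial_plus (has_partial_plus (has_partial_plus H1 H2) (has_partial_const j C x)) H3.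
apply: (has_partial_ext _ (has_partial_eq H _)) => [x'|]; rewrite /test_fun /cone /test_grad.
  by ring.
by field; lra.
Qed.

Lemma has_partial_test_grad i j x : has_partial j (test_grad i) x (test_hess i j x).
Proof.
have Hs : 0 < sqrt (sqdist x0 x + e) by apply/sqrt_lt_R0/shift_pos.
have K1 := has_partial_comp (derivable_pt_lim_inv_sqrt_shift A (shift_pos x))
  (has_partial_sqdist j x0 x).
have K2 := has_partial_mult (has_partial_plus K1 (has_partial_const j (- 2 * ep) x))
  (has_partial_coord_sub j i x0 x).
have K3 := has_partial_mult (has_partial_scal 4 (has_partial_sqdist j y x))
  (has_partial_coord_sub j i y x).
have Hs2 := shift_pos x.
apply: (has_partial_ext _ (has_partial_eq (has_partial_plus K2 K3) _)) => [x'|].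
  by rewrite /test_grad; ring.
by rewrite /test_hess; case: (i == j); field; lra.
Qed.

Lemma continuous_Rn_cone : continuous_Rn cone.
Proof.
apply: (continuous_Rn_ext (f := fun x => A * sqrt (sqdist x0 x + e) + (- ep) * sqdist x0 x)).
  by move=> x; rewrite /cone; ring.
apply: continuous_Rn_plus; last exact: continuous_Rn_scal (continuous_Rn_sqdist x0).
apply: continuous_Rn_scal; apply: (continuous_Rn_comp (h := fun z => sqrt (z + e))).
  by move=> x; apply: derivable_lim_continuity_pt; exact: derivable_pt_lim_sqrt_shift (shift_pos x).
exact: continuous_Rn_sqdist.
Qed.

Lemma cone_ge x : 0 <= A -> - (ep * sqdist x0 x) <= cone x.
Proof. by move=> HA; rewrite /cone; have := sqrt_pos (sqdist x0 x + e); nra. Qed.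

Lemma continuous_Rn_test_fun : continuous_Rn test_fun.
Proof.
apply: continuous_Rn_plus.
  by apply: continuous_Rn_plus; [exact: continuous_Rn_cone | exact: continuous_Rn_const].
exact: continuous_Rn_mult (continuous_Rn_sqdist y) (continuous_Rn_sqdist y).
Qed.

Lemma continuous_Rn_inv_sqrt_shift : continuous_Rn (fun x => A / sqrt (sqdist x0 x + e)).
Proof.
apply: (continuous_Rn_comp (h := fun z => A / sqrt (z + e))); last exact: continuous_Rn_sqdist.
move=> x; apply: derivable_lim_continuity_pt.
exact: derivable_pt_lim_inv_sqrt_shift (shift_pos x).
Qed.

Lemma continuous_Rn_test_grad i : continuous_Rn (test_grad i).
Proof.
apply: continuous_Rn_plus.
  apply: continuous_Rn_mult; last exact: continuous_Rn_coord_sub.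
  by apply: continuous_Rn_plus; [exact: continuous_Rn_inv_sqrt_shift | exact: continuous_Rn_const].
apply: continuous_Rn_mult; last exact: continuous_Rn_coord_sub.
exact: continuous_Rn_scal (continuous_Rn_sqdist y).
Qed.

Lemma continuous_Rn_test_hess i j : continuous_Rn (test_hess i j).
Proof.
have G0 : continuous_Rn (fun x => - A / ((sqdist x0 x + e) * sqrt (sqdist x0 x + e))).
  apply: (continuous_Rn_comp (h := fun z => - A / ((z + e) * sqrt (z + e))));
    last exact: continuous_Rn_sqdist.
  move=> x; have Hz := shift_pos x; have Hs : 0 < sqrt (sqdist x0 x + e) by apply: sqrt_lt_R0.
  have Hcont_shift := derivable_lim_continuity_pt (derivable_pt_lim_sqrt_shift Hz).
  apply: (continuity_pt_div (fun _ => - A) (fun z => (z + e) * sqrt (z + e))); last by simpl; nra.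
    exact: continuity_pt_const.
  apply: (continuity_pt_mult (fun z => z + e) (fun z => sqrt (z + e))) => //.
  apply: continuity_pt_plus; last exact: continuity_pt_const.
  exact: derivable_continuous_pt (derivable_pt_id _).
have Gc (c : R) := @continuous_Rn_const n c.
apply: continuous_Rn_plus;
  last by apply: continuous_Rn_mult => //; exact: continuous_Rn_scal (continuous_Rn_sqdist y).
apply: continuous_Rn_plus.
  apply: continuous_Rn_plus.
    by do 2!(apply: continuous_Rn_mult; last exact: continuous_Rn_coord_sub); exact: G0.
  apply: continuous_Rn_mult => //.
  by apply: continuous_Rn_plus; [exact: continuous_Rn_inv_sqrt_shift | exact: Gc].
apply: continuous_Rn_mult; last exact: continuous_Rn_coord_sub.
by apply: continuous_Rn_scal; exact: continuous_Rn_coord_sub.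
Qed.

Lemma C2_test_fun (U : Rn n -> Prop) : C2_data U test_fun test_grad test_hess.
Proof.
split; first exact/continuous_Rn_on/continuous_Rn_test_fun.
split; first by move=> *; exact: has_partial_test_fun.
split; first by move=> i; exact/continuous_Rn_on/continuous_Rn_test_grad.
split; first by move=> *; exact: has_partial_test_grad.
by move=> i j; exact/continuous_Rn_on/continuous_Rn_test_hess.
Qed.

Lemma test_fun_center : test_fun y = cone y + C.
Proof. by rewrite /test_fun sqdist_refl; ring. Qed.

Lemma test_grad_center :
  (fun i => test_grad i y) = vscal (A / sqrt (sqdist x0 y + e) - 2 * ep) (vsub y x0).
Proof.
by apply: functional_extensionality => i; rewrite /test_grad sqdist_refl /vscal /vsub; ring.
Qed.

Lemma test_hess_center : (fun i j => test_hess i j y) = fun i j =>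
  - A / ((sqdist x0 y + e) * sqrt (sqdist x0 y + e)) * (vsub y x0 j * vsub y x0 i)
  + (A / sqrt (sqdist x0 y + e) - 2 * ep) * (if i == j then 1 else 0).
Proof.
apply: functional_extensionality => i; apply: functional_extensionality => j.
by rewrite /test_hess sqdist_refl /vsub; case: (i == j); ring.
Qed.

End TestFunction.

Lemma cone_le_dist n (A ep h : R) (x0 x : Rn n) : 0 <= A -> 0 <= ep -> 0 <= h ->
  cone A (h * h) ep x0 x <= A * (vdist x x0 + h).
Proof.
move=> HA Hep Hh; rewrite /cone sqdist_vdist.
have := sqrt_add_sq_le (vdist_ge0 x x0) Hh; have := vdist_ge0 x x0; nra.
Qed.

Lemma quadform_rank_one_scal n (a c : R) (w : Rn n) :
  quadform (fun i j => a * (w j * w i) + c * (if i == j then 1 else 0)) (vscal c w) =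
  c * c * vdot w w * (a * vdot w w + c).
Proof.
have inner i : \big[Rplus/0]_(j < n)
      ((a * (w j * w i) + c * (if i == j then 1 else 0)) * vscal c w i * vscal c w j) =
    (a * c * c * vdot w w + c * c * c) * (w i * w i).
  transitivity (a * c * c * (w i * w i) * vdot w w + c * c * c * w i * w i); last ring.
  rewrite -(sumR_delta (fun j => c * c * c * w i * w j) i) /vdot -sumR_scal -sumR_add.
  by apply: eq_bigr => j _; rewrite /vscal eq_sym; case: (j == i); ring.
rewrite /quadform (eq_bigr _ (fun i _ => inner i)) sumR_scal -/(vdot w w); ring.
Qed.

(** * Comparison with cones *)

Lemma opE_pos n (Lam v : R) (xi : Rn n) X :
  0 < Lam -> v <= / Lam -> 1 < vnorm xi -> quadform X xi < 0 -> 0 < opE Lam v v xi X.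
Proof.
move=> HL Hv Hn Hq.
have HLv : Lam * v <= 1.
  by have := Rmult_le_compat_l _ _ _ (Rlt_le _ _ HL) Hv; rewrite Rinv_r; lra.
rewrite /opE; case: Rcase_abs => Hc /=.
  by rewrite /opG; apply: Rlt_le_trans (Rmax_r _ _); lra.
case: Req_EM_T => Hz /=; first by rewrite /opH; lra.
by rewrite /opF; apply: Rmin_glb_lt; [rewrite Rabs_right | ]; lra.
Qed.

Lemma no_steep_concave_radial_touch n (Om : Rn n -> Prop) (Lam : R) (u : Rn n -> R)
    (x0 y : Rn n) phi Dphi D2phi (c : R) :
  is_open Om -> is_convex Om -> smooth_boundary Om -> 0 < Lam ->
  visc_subsolution Lam Om u -> (forall x, closure Om x -> u x <= / Lam) ->
  Om x0 -> closure Om y -> C2_data (fun _ => True) phi Dphi D2phi ->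
  phi y = u y -> (forall x, closure Om x -> x <> y -> u x < phi x) ->
  0 < c -> (fun i => Dphi i y) = vscal c (vsub y x0) ->
  1 < vnorm (fun i => Dphi i y) -> quadform (fun i j => D2phi i j y) (fun i => Dphi i y) < 0 ->
  False.
Proof.
move=> Hop Hcv Hsb HL [_ [Hint Hbd]] Hmax Ox0 Cy HC2 Ety Htouch Hc Egrad Hsteep Hconc.
have HE : 0 < opE Lam (u y) (phi y) (fun i => Dphi i y) (fun i j => D2phi i j y).
  by rewrite Ety; apply: opE_pos => //; exact: Hmax.
have [Oy|Oy] := classic (Om y).
  have := Hint y phi Dphi D2phi Oy (C2_data_sub (fun _ _ => I) HC2) Ety
    (fun x Ox => Htouch x (closure_of Ox)).
  lra.
have Bdy : boundary Om y by split => // eps He; exists y; split => //; rewrite vdist_refl.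
have [r [rho [Drho Hld]]] := Hsb y Bdy.
pose g : Rn n := fun i => Drho i y.
have Hout : 0 < vdot g (vsub y x0) := gradient_points_outward Hop Hcv Ox0 Oy Cy Hld.
have Hg : 0 < vnorm g.
  have := vdot_le_vnorm g (vsub y x0); have := vnorm_ge0 g; have := vnorm_ge0 (vsub y x0); nra.
have Hnu : outer_unit_normal Om y (vscal (/ vnorm g) g) by exists r, rho, Drho.
have Hfull : is_open (fun _ : Rn n => True) by move=> x _; exists 1; split => //; lra.
have Hdot : 0 < vdot (fun i => Dphi i y) (vscal (/ vnorm g) g).
  rewrite Egrad vdot_vscal vdot_sym.
  by apply: Rmult_lt_0_compat => //; apply: Rmult_lt_0_compat => //; exact: Rinv_0_lt_compat.
have := Hbd y (fun _ => True) phi Dphi D2phi Bdy Hfull (fun _ _ => I) HC2 Ety Htouch _ Hnu.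
by have := Rmin_glb_lt _ _ _ HE Hdot; lra.
Qed.

Lemma cone_slope_gt1 (dl rh r h ep : R) :
  0 < rh -> rh <= r -> 0 < h -> h <= dl * rh / 4 -> 0 < dl <= 1 -> 2 * ep * r <= dl / 4 ->
  1 < ((1 + dl) / sqrt (r * r + h * h) - 2 * ep) * r.
Proof.
move=> Hrh Hr Hh Hh2 Hdl Hepr.
have Hq : 0 < sqrt (r * r + h * h) by apply: sqrt_lt_R0; nra.
have := sqrt_add_sq_le (Rlt_le _ _ (Rlt_le_trans _ _ _ Hrh Hr)) (Rlt_le _ _ Hh).
move: (sqrt _) Hq => q Hq Hq2.
have : 1 + dl / 4 < (1 + dl) * r / q by apply: lt_div_of_mul_lt => //; nra.
rewrite /Rdiv Rmult_assoc (Rmult_comm r) -Rmult_assoc -/(Rdiv _ _).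
nra.
Qed.

Lemma cone_radial_concave (dl rh s h ep : R) :
  0 < rh -> rh * rh <= s -> 0 < h -> 0 < ep -> h <= rh * Rmin 1 (ep * rh / 2) -> 0 < dl <= 1 ->
  - (1 + dl) / ((s + h * h) * sqrt (s + h * h)) * s + ((1 + dl) / sqrt (s + h * h) - 2 * ep) < 0.
Proof.
move=> Hrh Hs Hh Hep Hh2 Hdl.
have Hz : 0 < s + h * h by nra.
have Hsz : rh <= sqrt (s + h * h) by rewrite -(sqrt_square rh); [apply: sqrt_le_1_alt; nra | lra].
have -> : - (1 + dl) / ((s + h * h) * sqrt (s + h * h)) * s
    + ((1 + dl) / sqrt (s + h * h) - 2 * ep) =
  (1 + dl) * (h * h) / ((s + h * h) * sqrt (s + h * h)) - 2 * ep by field; lra.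
have Hzh : rh * rh <= s + h * h by nra.
move: (s + h * h) (sqrt _) Hz Hsz Hzh => z q Hz Hsz Hzh.
have Hm1 := Rmin_l 1 (ep * rh / 2); have Hm2 := Rmin_r 1 (ep * rh / 2).
have Hm0 : 0 < Rmin 1 (ep * rh / 2) by apply: Rmin_pos; nra.
move: (Rmin 1 _) Hh2 Hm1 Hm2 Hm0 => m Hh2 Hm1 Hm2 Hm0.
have Hhh : h * h <= rh * rh * m.
  have : h * h <= (rh * m) * (rh * m) by nra.
  nra.
have Hhh2 : (1 + dl) * (h * h) <= ep * (rh * rh * rh).
  have : rh * rh * m <= rh * rh * (ep * rh / 2) by apply: Rmult_le_compat_l; nra.
  nra.
have Hzz : rh * rh * rh <= z * q by nra.
suff : (1 + dl) * (h * h) / (z * q) < 2 * ep by lra.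
by apply: div_lt_of_lt_mul; nra.
Qed.

Lemma pos_below2 (a b : R) : 0 < a -> 0 < b -> exists x, [/\ 0 < x, x <= a & x <= b].
Proof.
by move=> Ha Hb; exists (Rmin a b); split; [exact: Rmin_pos | exact: Rmin_l | exact: Rmin_r].
Qed.

Lemma comparison_parameters (gam D rho0 : R) : 0 < gam -> 0 <= D -> 0 < rho0 ->
  exists dl ep h, [/\ 0 < dl <= 1, dl * D <= gam / 8, 0 < ep, 2 * ep * D <= dl / 4
    & ep * (D * D) <= gam / 8] /\
  [/\ 0 < h, h <= gam / 16, h <= dl * rho0 / 4 & h <= rho0 * Rmin 1 (ep * rho0 / 2)].
Proof.
move=> Hgam HD Hr0.
have [dl [Hdl0 Hdl1 Hdl2]] :=
  pos_below2 Rlt_0_1 (Rdiv_lt_0_compat gam (8 * (D + 1)) Hgam ltac:(lra)).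
have [ep [Hep0 Hep1 Hep2]] := pos_below2 (Rdiv_lt_0_compat dl (8 * (D + 1)) Hdl0 ltac:(lra))
  (Rdiv_lt_0_compat gam (8 * (D * D + 1)) Hgam ltac:(nra)).
have Hm : 0 < rho0 * Rmin 1 (ep * rho0 / 2) by apply: Rmult_lt_0_compat => //; apply: Rmin_pos; nra.
have [h1 [Hh10 Hh11 Hh12]] := pos_below2 (ltac:(nra) : 0 < dl * rho0 / 4) Hm.
have [h [Hh0 Hh1 Hh2]] := pos_below2 (ltac:(lra) : 0 < gam / 16) Hh10.
have := mul_le_of_le_div (ltac:(lra) : 0 < 8 * (D + 1)) Hdl2.
have := mul_le_of_le_div (ltac:(lra) : 0 < 8 * (D + 1)) Hep1.
have := mul_le_of_le_div (ltac:(nra) : 0 < 8 * (D * D + 1)) Hep2.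
move=> H1 H2 H3.
exists dl, ep, h; split; split; try lra; nra.
Qed.

Section ConeComparison.
Variables (n : nat) (Om : Rn n -> Prop) (Lam M : R) (u : Rn n -> R).
Hypotheses (Hop : is_open Om) (Hcv : is_convex Om) (Hsb : smooth_boundary Om) (HL : 0 < Lam)
  (Hsub : visc_subsolution Lam Om u) (Hmax : forall x, closure Om x -> u x <= / Lam)
  (Hc : continuous_on (closure Om) u) (HM : forall x, Om x -> vnorm x <= M).

Lemma u_sub_attains_max (g : Rn n -> R) (B : R) : (exists x, Om x) -> continuous_Rn g ->
  (forall x, closure Om x -> B <= g x) ->
  exists y, closure Om y /\ forall x, closure Om x -> u x - g x <= u y - g y.
Proof.
move=> [x0 Ox0] Hg HB; apply: (@continuous_attains_max _ _ _ (M + 1)).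
- move=> x Cx i; have := abs_coord_le_vnorm x i; have := closure_vnorm_le HM Cx; lra.
- exact: closure_idem.
- by exists x0; exact: closure_of.
- exact: continuous_on_sub.
- by exists (/ Lam - B) => x Cx; have := Hmax Cx; have := HB x Cx; lra.
Qed.

Lemma no_far_max_point (x0 y : Rn n) (dl ep h rho0 : R) :
  Om x0 -> closure Om y -> 0 < dl <= 1 -> 0 < ep -> 0 < h -> h <= dl * rho0 / 4 ->
  h <= rho0 * Rmin 1 (ep * rho0 / 2) -> 0 < rho0 <= vdist y x0 -> 2 * ep * vdist y x0 <= dl / 4 ->
  (forall x, closure Om x ->
     u x - cone (1 + dl) (h * h) ep x0 x <= u y - cone (1 + dl) (h * h) ep x0 y) ->
  False.
Proof.
move=> Ox0 Cy Hdl Hep Hh0 Hh2 Hh3 [Hr0 Hfar] Hepr Hy.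
have He : 0 < h * h by nra.
have Hr : 0 < vdist y x0 by lra.
have Hs : sqdist x0 y = vdist y x0 * vdist y x0 by exact: sqdist_vdist.
have Hslope : 1 < ((1 + dl) / sqrt (sqdist x0 y + h * h) - 2 * ep) * vdist y x0.
  by rewrite Hs; apply: (cone_slope_gt1 Hr0 Hfar Hh0 Hh2 Hdl).
have Hconc : - (1 + dl) / ((sqdist x0 y + h * h) * sqrt (sqdist x0 y + h * h)) * sqdist x0 y
    + ((1 + dl) / sqrt (sqdist x0 y + h * h) - 2 * ep) < 0.
  by apply: (cone_radial_concave Hr0 _ Hh0 Hep Hh3 Hdl); rewrite Hs; apply: Rmult_le_compat; lra.
have [c Ec] : exists c, (1 + dl) / sqrt (sqdist x0 y + h * h) - 2 * ep = c by eexists.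
rewrite Ec in Hslope Hconc.
have Hc0 : 0 < c by apply: Rnot_le_lt => Hc0; nra.
pose C := u y - cone (1 + dl) (h * h) ep x0 y.
apply: (@no_steep_concave_radial_touch _ Om Lam u x0 y (test_fun (1 + dl) (h * h) ep C x0 y)
  (test_grad (1 + dl) (h * h) ep x0 y) (test_hess (1 + dl) (h * h) ep x0 y) c) => //.
- exact: C2_test_fun.
- by rewrite test_fun_center /C; ring.
- move=> x Cx Hxy; have := Hy x Cx; rewrite /test_fun /C.
  suff : 0 < sqdist y x by nra.
  rewrite sqdist_vdist; have [Hpos|Heq] := Rle_lt_or_eq_dec _ _ (vdist_ge0 x y); first nra.
  by move/esym/vdist_eq0: Heq.
- by rewrite test_grad_center Ec.
- by rewrite test_grad_center Ec vnorm_scal Rabs_right; [| lra].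
- rewrite test_hess_center test_grad_center Ec quadform_rank_one_scal.
  change (vdot (vsub y x0) (vsub y x0)) with (sqdist x0 y).
  have Hcs : 0 < c * c * sqdist x0 y by rewrite Hs; apply: Rmult_lt_0_compat; nra.
  nra.
Qed.

Lemma subsolution_le_dist xb x0 : closure Om xb -> Om x0 -> u x0 <= 0 -> u xb <= vdist xb x0.
Proof.
move=> Cxb Ox0 Hux0; apply: Rnot_lt_le => Hlt.
have [gam [Hgam Egam]] : exists gam, 0 < gam /\ u xb = vdist xb x0 + gam.
  by exists (u xb - vdist xb x0); split; lra.
have Cx0 := closure_of Ox0.
have HD x : closure Om x -> vdist x x0 <= 2 * (M + 1).
  move=> Cx; have := vdist_le_vnorm_add x x0.
  by have := closure_vnorm_le HM Cx; have := closure_vnorm_le HM Cx0; lra.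
have HD0 : 0 <= 2 * (M + 1) by have := HD x0 Cx0; rewrite vdist_refl; lra.
move: (2 * (M + 1)) HD HD0 => D HD HD0.
have [rho0 [Hr0 Hnear]] := Hc Cx0 (ltac:(lra) : 0 < gam / 4).
have [dl [ep [h [[Hdl HdlD Hep HepD HepD2] [Hh0 Hh1 Hh2 Hh3]]]]] :=
  comparison_parameters Hgam HD0 Hr0.
have He : 0 < h * h by nra.
pose cn := cone (1 + dl) (h * h) ep x0.
have Hcn_lb x : closure Om x -> - (gam / 8) <= cn x.
  move=> Cx; have := cone_ge (h * h) ep x0 x (ltac:(lra) : 0 <= 1 + dl); rewrite sqdist_vdist.
  have Hsq : vdist x x0 * vdist x x0 <= D * D by have := HD x Cx; have := vdist_ge0 x x0; nra.
  by have := Rmult_le_compat_l _ _ _ (Rlt_le _ _ Hep) Hsq; rewrite /cn; lra.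
have Hcn_xb : cn xb <= vdist xb x0 + gam / 4.
  have := cone_le_dist x0 xb (ltac:(lra) : 0 <= 1 + dl) (Rlt_le _ _ Hep) (Rlt_le _ _ Hh0).
  by have := HD xb Cxb; have := vdist_ge0 xb x0; rewrite /cn; nra.
have [y [Cy Hy]] : exists y, closure Om y /\ forall x, closure Om x -> u x - cn x <= u y - cn y.
  exact: u_sub_attains_max (ex_intro _ x0 Ox0) (continuous_Rn_cone _ _ _ He) Hcn_lb.
have Hfar : rho0 <= vdist y x0.
  apply: Rnot_lt_le => Hyx.
  by have := Hnear y Cy Hyx; have := Hy xb Cxb; have := Hcn_lb y Cy; split_Rabs; lra.
apply: (no_far_max_point Ox0 Cy Hdl Hep Hh0 Hh2 Hh3 (conj Hr0 Hfar) _ Hy).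
by have := Rmult_le_compat_l _ _ _ (Rlt_le _ _ Hep) (HD y Cy); lra.
Qed.

End ConeComparison.

Lemma closure_positive_part n (Om : Rn n -> Prop) (u : Rn n -> R) x :
  continuous_on (closure Om) u -> closure Om x -> 0 < u x -> closure (fun y => Om y /\ u y > 0) x.
Proof.
move=> Hc Cx Hux eps He.
have [d [Hd Hnear]] := Hc x Cx (u x / 2) ltac:(lra).
have [y [Oy Hy]] := Cx (Rmin eps d) (Rmin_pos _ _ He Hd).
exists y; split; last exact: Rlt_le_trans Hy (Rmin_l _ _).
split => //; have := Hnear y (closure_of Oy) (Rlt_le_trans _ _ _ Hy (Rmin_r _ _)).
by split_Rabs; lra.
Qed.

Theorem mainTheorem11 (n : nat) (Omega : Rn n -> Prop) (Lam : R) (u : Rn n -> R) :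
  is_open Omega -> is_bounded Omega -> is_convex Omega -> smooth_boundary Omega ->
  0 < Lam ->
  visc_solution Lam Omega u ->
  (exists x y, closure Omega x /\ closure Omega y /\ u x <> u y) ->
  (forall x, closure Omega x -> u x <= / Lam) ->
  (exists x, closure Omega x /\ u x = / Lam) ->
  (forall x x0, closure Omega x -> 0 <= u x -> Omega x0 -> u x0 <= 0 ->
     vdist x x0 >= u x) /\
  (forall eps, 0 < eps ->
     exists x, closure (fun y => Omega y /\ u y > 0) x /\
       forall z, Omega z -> u z = 0 -> vdist x z >= / Lam - eps).
Proof.
move=> Hop [M HM] Hcv Hsb HL [Hc [Hsub _]] _ Hmax [xm [Cxm Hxm]].
have Hdist := subsolution_le_dist Hop Hcv Hsb HL Hsub Hmax Hc HM.
split => [x x0 Cx _ Ox0 Hux0|eps Heps]; first exact/Rle_ge/Hdist.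
have HiL : 0 < / Lam by exact: Rinv_0_lt_compat.
exists xm; split; first by apply: closure_positive_part; rewrite ?Hxm.
by move=> z Oz Hz; have := Hdist xm z Cxm Oz (Req_le _ _ Hz); lra.
Qed.
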